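(* Let $(H,\mu_H,\Delta_H)$ be a bialgebra and $(C,\mu_C)$ a right $H$-module algebra in the usual sense with action $c\otimes h\mapsto c\cdot h$; let $\alpha_H:H\to H$ be a bijective bialgebra endomorphism and $\alpha_C:C\to C$ a bijective algebra endomorphism with $\alpha_C(c\cdot h)=\alpha_C(c)\cdot\alpha_H(h)$ for all $h,c$. Let $H\# C$ be the usual smash product, $H\otimes C$ with $(h\# c)(h'\# c')=hh'_1\#(c\cdot h'_2)c'$. Then $\alpha_H\otimes\alpha_C$ is an algebra endomorphism of $H\# C$ and the Hom-associative algebras $(H\# C)_{\alpha_H\otimes\alpha_C}$ and $H_{\alpha_H}\# C_{\alpha_C}$ coincide, where the latter is the Hom-smash product formed with respect to the right action $c\triangleleft h:=\alpha_C(c\cdot h)$ of the Hom-bialgebra $H_{\alpha_H}$ on $C_{\alpha_C}$.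
   Context: Over a field $k$, (co)units not assumed; a bialgebra is an associative algebra with coassociative multiplicative $\Delta(h)=h_1\otimes h_2$; a right module algebra in the usual sense satisfies $c\cdot(hh')=(c\cdot h)\cdot h'$, $(cc')\cdot h=(c\cdot h_1)(c'\cdot h_2)$. For an associative algebra $(A,\mu)$ with algebra endomorphism $\alpha$, $A_\alpha=(A,\alpha\circ\mu,\alpha)$ is Hom-associative ($\alpha(aa')=\alpha(a)\alpha(a')$, $\alpha(a)(a'a'')=(aa')\alpha(a'')$); $H_{\alpha_H}=(H,\alpha_H\circ\mu_H,\Delta_H\circ\alpha_H,\alpha_H)$ is a Hom-bialgebra and $C_{\alpha_C}$ is a right $H_{\alpha_H}$-module Hom-algebra via $\triangleleft$. For a Hom-bialgebra $(H,\mu_H,\Delta_H,\alpha_H)$ and right $H$-module Hom-algebra $(C,\mu_C,\alpha_C)$ with action $\cdot$ and $\alpha_H,\alpha_C$ bijective, the Hom-smash product $H\# C$ is $H\otimes C$ with structure map $\alpha_H\otimes\alpha_C$ and product $(h\# c)(h'\# c')=h\alpha_H^{-1}(h'_1)\#(\alpha_C^{-1}(c)\cdot\alpha_H^{-2}(h'_2))c'$. *)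

(* Tensor products over a field k are modelled by finite
   lists of pure tensors, identified up to evaluation against all bilinear
   forms. *)
From HB Require Import structures.
From mathcomp Require Import all_boot all_algebra.
Set Implicit Arguments. Unset Strict Implicit. Unset Printing Implicit Defensive.
Import GRing.Theory.
Local Open Scope ring_scope.

Definition linmap (K : fieldType) (U V : lmodType K) (f : U -> V) : Prop :=
  forall (a : K) u u', f (a *: u + u') = a *: f u + f u'.

Definition bilinmap (K : fieldType) (U V W : lmodType K) (f : U -> V -> W) : Prop :=
  (forall (a : K) u u' v, f (a *: u + u') v = a *: f u v + f u' v) /\
  (forall (a : K) u v v', f u (a *: v + v') = a *: f u v + f u v').

Definition bilinform (K : fieldType) (U V : lmodType K) (b : U -> V -> K) : Prop :=
  (forall (a : K) u u' v, b (a *: u + u') v = a * b u v + b u' v) /\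
  (forall (a : K) u v v', b u (a *: v + v') = a * b u v + b u v').

Definition trilinform (K : fieldType) (U V W : lmodType K) (t : U -> V -> W -> K) : Prop :=
  (forall (a : K) u u' v w, t (a *: u + u') v w = a * t u v w + t u' v w) /\
  (forall (a : K) u v v' w, t u (a *: v + v') w = a * t u v w + t u v' w) /\
  (forall (a : K) u v w w', t u v (a *: w + w') = a * t u v w + t u v w').

Definition tensor (U V : Type) := seq (U * V).

Definition teq (K : fieldType) (U V : lmodType K) (t t' : tensor U V) : Prop :=
  forall b : U -> V -> K, bilinform b ->
    \sum_(p <- t) b p.1 p.2 = \sum_(p <- t') b p.1 p.2.

Definition tscale (K : fieldType) (U V : lmodType K) (a : K) (t : tensor U V)
  : tensor U V := [seq (a *: p.1, p.2) | p <- t].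

Definition tmap (U V U' V' : Type) (f : U -> U') (g : V -> V') (t : tensor U V)
  : tensor U' V' := [seq (f p.1, g p.2) | p <- t].

Definition tmul (U V : Type) (m : U -> V -> U -> V -> tensor U V)
  (t t' : tensor U V) : tensor U V :=
  flatten [seq flatten [seq m p.1 p.2 q.1 q.2 | q <- t'] | p <- t].

Definition is_nu_algebra (K : fieldType) (A : lmodType K) (mul : A -> A -> A) : Prop :=
  bilinmap mul /\ associative mul.

Definition is_bialgebra (K : fieldType) (H : lmodType K)
  (mul : H -> H -> H) (Delta : H -> tensor H H) : Prop :=
  [/\ is_nu_algebra mul,
      (forall (a : K) h h', teq (Delta (a *: h + h')) (tscale a (Delta h) ++ Delta h')),
      (forall h (t : H -> H -> H -> K), trilinform t ->
         \sum_(p <- Delta h) \sum_(q <- Delta p.1) t q.1 q.2 p.2 =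
         \sum_(p <- Delta h) \sum_(q <- Delta p.2) t p.1 q.1 q.2)
    & (forall h h', teq (Delta (mul h h'))
         (tmul (fun x y x' y' => [:: (mul x x', mul y y')]) (Delta h) (Delta h')))].

Definition is_right_module_algebra (K : fieldType) (H C : lmodType K)
  (mulH : H -> H -> H) (DeltaH : H -> tensor H H) (mulC : C -> C -> C)
  (act : C -> H -> C) : Prop :=
  [/\ bilinmap act,
      (forall c h h', act c (mulH h h') = act (act c h) h')
    & (forall c c' h, act (mulC c c') h =
         \sum_(p <- DeltaH h) mulC (act c p.1) (act c' p.2))].

Definition is_algebra_endo (K : fieldType) (A : lmodType K) (mul : A -> A -> A)
  (f : A -> A) : Prop :=
  linmap f /\ (forall x y, f (mul x y) = mul (f x) (f y)).

Definition is_bialgebra_endo (K : fieldType) (H : lmodType K) (mul : H -> H -> H)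
  (Delta : H -> tensor H H) (f : H -> H) : Prop :=
  is_algebra_endo mul f /\ (forall h, teq (Delta (f h)) (tmap f f (Delta h))).

Definition smash_mul (H C : Type) (mulH : H -> H -> H) (DeltaH : H -> tensor H H)
  (mulC : C -> C -> C) (act : C -> H -> C) : H -> C -> H -> C -> tensor H C :=
  fun h c h' c' => [seq (mulH h p.1, mulC (act c p.2) c') | p <- DeltaH h'].

(* Hom-smash product on pure tensors:
   (h#c)(h'#c') = h aH^-1(h'_1) # (aC^-1(c) . aH^-2(h'_2)) c' *)
Definition hom_smash_mul (H C : Type) (mulH : H -> H -> H) (DeltaH : H -> tensor H H)
  (aHi : H -> H) (mulC : C -> C -> C) (aCi : C -> C) (act : C -> H -> C)
  : H -> C -> H -> C -> tensor H C :=
  fun h c h' c' =>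
    [seq (mulH h (aHi p.1), mulC (act (aCi c) (aHi (aHi p.2))) c') | p <- DeltaH h'].

(* Yau twists: A_alpha has product alpha o mu; H_alpha has coproduct Delta o alpha;
   twisted action c <| h := alpha_C (c . h) *)
Definition hom_mul (A : Type) (alpha : A -> A) (mul : A -> A -> A) : A -> A -> A :=
  fun x y => alpha (mul x y).
Definition hom_Delta (H : Type) (Delta : H -> tensor H H) (alpha : H -> H)
  : H -> tensor H H := fun h => Delta (alpha h).
Definition hom_act (H C : Type) (aC : C -> C) (act : C -> H -> C) : C -> H -> C :=
  fun c h => aC (act c h).

(** Everything reduces to pure tensors, where both sides are images of the
    coproduct [Delta h'] under a pair of linear maps.  The compatibility
    [Delta (aH h') = (aH (x) aH) (Delta h')] then lets [aH], [aC] be pushed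
    through the smash product, and in the Hom-smash product the inverses
    [aHi], [aCi] cancel against the twists coming from [Delta o aH] and
    [c <| h = aC (c . h)]. *)
From HB Require Import structures.
From mathcomp Require Import all_boot all_algebra.
Set Implicit Arguments. Unset Strict Implicit.
Import GRing.Theory.
Local Open Scope ring_scope.

Section LinearMaps.
Variable K : fieldType.

Lemma linmap_comp (U V W : lmodType K) (f : V -> W) (g : U -> V) :
  linmap f -> linmap g -> linmap (f \o g).
Proof. by move=> lf lg a u u'; rewrite /= lg lf. Qed.

Lemma linmap_can (U : lmodType K) (f g : U -> U) :
  linmap f -> cancel f g -> cancel g f -> linmap g.
Proof. by move=> lf fg gf a u u'; rewrite -{1}(gf u) -{1}(gf u') -lf fg. Qed.

Lemma bilinmap_linl (U V W : lmodType K) (f : U -> V -> W) (v : V) :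
  bilinmap f -> linmap (f^~ v).
Proof. by case=> fl _ a u u'; rewrite fl. Qed.

Lemma bilinmap_linr (U V W : lmodType K) (f : U -> V -> W) (u : U) :
  bilinmap f -> linmap (f u).
Proof. by case=> _ fr a v v'; rewrite fr. Qed.

End LinearMaps.

Section TensorEquality.
Variable K : fieldType.

Lemma teq_sym (U V : lmodType K) (t t' : tensor U V) : teq t t' -> teq t' t.
Proof. by move=> e b bb; rewrite e. Qed.

Lemma teq_tmap (U V U' V' : lmodType K) (f : U -> U') (g : V -> V')
    (t t' : tensor U V) :
  linmap f -> linmap g -> teq t t' -> teq (tmap f g t) (tmap f g t').
Proof.
move=> lf lg e b [bl br]; rewrite !big_map.
by apply: (e (fun x y => b (f x) (g y))); split=> a u u' v /=;
  rewrite ?lf ?lg ?bl ?br.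
Qed.

Lemma teq_tmul (U V : lmodType K) (m m' : U -> V -> U -> V -> tensor U V)
    (t t' : tensor U V) :
  (forall x y x' y', teq (m x y x' y') (m' x y x' y')) ->
  teq (tmul m t t') (tmul m' t t').
Proof.
move=> e b bb; rewrite /tmul !big_flatten !big_map; apply: eq_bigr => p _.
by rewrite !big_flatten !big_map; apply: eq_bigr => q _; apply: e.
Qed.

End TensorEquality.

Lemma tmap_tmul (U V : Type) (f : U -> U) (g : V -> V)
    (m : U -> V -> U -> V -> tensor U V) (t t' : tensor U V) :
  tmap f g (tmul m t t') =
  tmul (fun x y x' y' => tmap f g (m x y x' y')) t t'.
Proof.
rewrite /tmul /tmap map_flatten -map_comp; congr flatten; apply: eq_map => p.
by rewrite /= map_flatten -map_comp.
Qed.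

Lemma tmul_tmap (U V : Type) (f : U -> U) (g : V -> V)
    (m : U -> V -> U -> V -> tensor U V) (t t' : tensor U V) :
  tmul m (tmap f g t) (tmap f g t') =
  tmul (fun x y x' y' => m (f x) (g y) (f x') (g y')) t t'.
Proof.
rewrite /tmul /tmap -map_comp; congr flatten; apply: eq_map => p.
by rewrite /= -map_comp.
Qed.

Section SmashProduct.
Variables (K : fieldType) (H C : lmodType K).
Variables (mulH : H -> H -> H) (DeltaH : H -> tensor H H).
Variables (mulC : C -> C -> C) (act : C -> H -> C).
Variables (aH aHi : H -> H) (aC aCi : C -> C).

Hypothesis mulH_bilin : bilinmap mulH.
Hypothesis mulC_bilin : bilinmap mulC.
Hypothesis act_bilin : bilinmap act.
Hypothesis aH_lin : linmap aH.
Hypothesis aC_lin : linmap aC.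
Hypothesis aH_mul : forall x y, aH (mulH x y) = mulH (aH x) (aH y).
Hypothesis aC_mul : forall x y, aC (mulC x y) = mulC (aC x) (aC y).
Hypothesis aH_Delta : forall h, teq (DeltaH (aH h)) (tmap aH aH (DeltaH h)).
Hypothesis aC_act : forall c h, aC (act c h) = act (aC c) (aH h).

Let smash := smash_mul mulH DeltaH mulC act.

Lemma smash_mul_morph h c h' c' :
  teq (tmap aH aC (smash h c h' c')) (smash (aH h) (aC c) (aH h') (aC c')).
Proof.
have -> : tmap aH aC (smash h c h' c') =
    tmap (mulH (aH h)) ((mulC^~ (aC c')) \o act (aC c)) (tmap aH aH (DeltaH h')).
  by rewrite /tmap /smash /smash_mul -!map_comp; apply: eq_map => p /=;
    rewrite aH_mul aC_mul aC_act.
apply/teq_sym/teq_tmap.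
- exact: bilinmap_linr.
- by apply: linmap_comp; [apply: bilinmap_linl | apply: bilinmap_linr].
- exact: aH_Delta.
Qed.

Hypotheses (aHK : cancel aH aHi) (aHiK : cancel aHi aH).
Hypothesis aCiK : cancel aCi aC.

Lemma smash_mul_hom_smash_mul h c h' c' :
  teq (tmap aH aC (smash h c h' c'))
      (hom_smash_mul (hom_mul aH mulH) (hom_Delta DeltaH aH) aHi
                     (hom_mul aC mulC) aCi (hom_act aC act) h c h' c').
Proof.
pose f := aH \o mulH h \o aHi.
pose g := aC \o mulC^~ c' \o aC \o act (aCi c) \o aHi \o aHi.
have -> : tmap aH aC (smash h c h' c') = tmap f g (tmap aH aH (DeltaH h')).
  by rewrite /tmap /smash /smash_mul -!map_comp; apply: eq_map => p;
    rewrite /f /g /= !aHK aC_act aCiK aHiK.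
have aHi_lin : linmap aHi := linmap_can aH_lin aHK aHiK.
apply/teq_sym/teq_tmap.
- by do 2![apply: linmap_comp => //]; apply: bilinmap_linr.
- by do 5![apply: linmap_comp => //]; [apply: bilinmap_linl | apply: bilinmap_linr].
- exact: aH_Delta.
Qed.

End SmashProduct.

Theorem proposition3p14 (K : fieldType) (H C : lmodType K)
  (mulH : H -> H -> H) (DeltaH : H -> tensor H H)
  (mulC : C -> C -> C) (act : C -> H -> C)
  (aH aHi : H -> H) (aC aCi : C -> C) :
  is_bialgebra mulH DeltaH ->
  is_nu_algebra mulC ->
  is_right_module_algebra mulH DeltaH mulC act ->
  is_bialgebra_endo mulH DeltaH aH -> cancel aH aHi -> cancel aHi aH ->
  is_algebra_endo mulC aC -> cancel aC aCi -> cancel aCi aC ->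
  (forall c h, aC (act c h) = act (aC c) (aH h)) ->
  (* aH (x) aC is an algebra endomorphism of H # C *)
  (forall t t' : tensor H C,
     teq (tmap aH aC (tmul (smash_mul mulH DeltaH mulC act) t t'))
         (tmul (smash_mul mulH DeltaH mulC act) (tmap aH aC t) (tmap aH aC t'))) /\
  (* the product of (H # C)_(aH (x) aC) equals that of H_aH # C_aC *)
  (forall t t' : tensor H C,
     teq (tmap aH aC (tmul (smash_mul mulH DeltaH mulC act) t t'))
         (tmul (hom_smash_mul (hom_mul aH mulH) (hom_Delta DeltaH aH) aHi
                              (hom_mul aC mulC) aCi (hom_act aC act)) t t')).
Proof.
move=> [[mulH_bilin _] _ _ _] [mulC_bilin _] [act_bilin _ _]
  [[aH_lin aH_mul] aH_Delta] aHK aHiK [aC_lin aC_mul] _ aCiK aC_act.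
split=> t t'; rewrite tmap_tmul ?tmul_tmap; apply: teq_tmul => h c h' c'.
- exact: smash_mul_morph.
- exact: smash_mul_hom_smash_mul.
Qed.
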